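(* Let $w=w_1\cdots w_n$ be a word of length $n\ge 2$ and let $\mathrm{A}\ne\mathrm{M}$ be two letters used in $w$. Let $T=\{i\in[n]: w_i=\mathrm{A},\ w_{n-i+1}=\mathrm{M}\}$ and $t=|T|$. Then $f(w)\ge 4t$. Moreover, if $w$ uses only the letters $\mathrm{A}$ and $\mathrm{M}$, then $f(w)\ge n+t$.
   Context: A word of length $n$ is a sequence $w=w_1w_2\cdots w_n$ of letters (symbols). Let $[n]=\{1,\dots,n\}$. An $n$-grid is a function $G:[n]^2\to\Sigma$, where $\Sigma$ is an arbitrary set of letters. The $i$th row of $G$ contains $w$ if $G(i,j)=w_j$ for all $1\le j\le n$, or $G(i,j)=w_{n-j+1}$ for all $1\le j\le n$. The $j$th column contains $w$ if $G(i,j)=w_i$ for all $i$, or $G(i,j)=w_{n-i+1}$ for all $i$. The main diagonal contains $w$ if $G(i,i)=w_i$ for all $i$ or $G(i,i)=w_{n-i+1}$ for all $i$; the anti-diagonal contains $w$ if $G(i,n-i+1)=w_i$ for all $i$ or $G(i,n-i+1)=w_{n-i+1}$ for all $i$. Let $f(w,G)$ be the number of the $2n+2$ lines ($n$ rows, $n$ columns, $2$ diagonals) of $G$ that contain $w$, and $f(w)=\max_G f(w,G)$ over all $n$-grids $G$. *)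

(* Indices are 0-based: position i : 'I_n stands for i+1,
   and rev_ord i (value n-1-i) stands for n-i+1. *)
From mathcomp Require Import all_boot all_order.
Set Implicit Arguments. Unset Strict Implicit. Unset Printing Implicit Defensive.

Section Grids.
Variable T : finType.

Definition grid (n : nat) := {ffun 'I_n * 'I_n -> T}.

Definition row_contains n (w : n.-tuple T) (G : grid n) (i : 'I_n) : bool :=
  [forall j, G (i, j) == tnth w j] || [forall j, G (i, j) == tnth w (rev_ord j)].

Definition col_contains n (w : n.-tuple T) (G : grid n) (j : 'I_n) : bool :=
  [forall i, G (i, j) == tnth w i] || [forall i, G (i, j) == tnth w (rev_ord i)].

Definition diag_contains n (w : n.-tuple T) (G : grid n) : bool :=
  [forall i, G (i, i) == tnth w i] || [forall i, G (i, i) == tnth w (rev_ord i)].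

Definition antidiag_contains n (w : n.-tuple T) (G : grid n) : bool :=
  [forall i, G (i, rev_ord i) == tnth w i]
  || [forall i, G (i, rev_ord i) == tnth w (rev_ord i)].

Definition fwG n (w : n.-tuple T) (G : grid n) : nat :=
  #|[set i | row_contains w G i]| + #|[set j | col_contains w G j]|
  + diag_contains w G + antidiag_contains w G.

Definition fw n (w : n.-tuple T) : nat := \max_(G : grid n) fwG w G.

End Grids.

(* Fill a set of rows and a set of columns with copies of w, each read forwards or
   backwards; this is a grid as soon as every chosen row and chosen column agree at their
   crossing.  Orient the line through a position i of T so that it reads A at i and M at
   n-i+1, and the line through the mirror position n-i+1 the other way round: these 2t
   positions are distinct because A <> M, and two such lines read A at their crossing if
   they have the same orientation and M otherwise, so 2t rows and 2t columns contain w.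
   If w only uses A and M, read row r forwards when w_r = A and backwards when w_r = M:
   at a column c of T it then shows w_c = A or w_(n-c+1) = M, i.e. w_r, so all n rows and
   the t columns of T, read forwards, contain w. *)
From mathcomp Require Import all_boot all_order.

Set Implicit Arguments.
Unset Strict Implicit.
Unset Printing Implicit Defensive.

Definition orient n (b : bool) (i : 'I_n) : 'I_n := if b then rev_ord i else i.

Section CrossGrid.
Variables (T : finType) (n : nat) (w : n.-tuple T).

Lemma fwG_le_fw (G : grid T n) : fwG w G <= fw w.
Proof. exact: (@leq_bigmax _ (fun G => fwG w G)). Qed.

Lemma row_contains_orient (G : grid T n) i b :
  (forall j, G (i, j) = tnth w (orient b j)) -> row_contains w G i.
Proof.
by move=> Gi; apply/orP; case: b Gi => Gi; [right | left]; apply/forallP => j; rewrite Gi.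
Qed.

Lemma col_contains_orient (G : grid T n) j b :
  (forall i, G (i, j) = tnth w (orient b i)) -> col_contains w G j.
Proof.
by move=> Gj; apply/orP; case: b Gj => Gj; [right | left]; apply/forallP => i; rewrite Gj.
Qed.

Variables (row_or col_or : 'I_n -> option bool).
Hypothesis row_col_agree : forall r c a b,
  row_or r = Some a -> col_or c = Some b -> tnth w (orient a c) = tnth w (orient b r).

Definition cross_grid : grid T n :=
  [ffun p => match row_or p.1, col_or p.2 with
             | Some a, _ => tnth w (orient a p.2)
             | None, Some b => tnth w (orient b p.1)
             | None, None => tnth w p.1
             end].

Lemma cross_grid_rows r a : row_or r = Some a -> row_contains w cross_grid r.
Proof. by move=> ra; apply: (row_contains_orient (b := a)) => j; rewrite ffunE /= ra. Qed.

Lemma cross_grid_cols c b : col_or c = Some b -> col_contains w cross_grid c.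
Proof.
move=> cb; apply: (col_contains_orient (b := b)) => i; rewrite ffunE /= cb.
by case ra: (row_or i) => [a|] //; apply: row_col_agree.
Qed.

Lemma fw_ge_cross :
  #|[set r | isSome (row_or r)]| + #|[set c | isSome (col_or c)]| <= fw w.
Proof.
apply: leq_trans (fwG_le_fw cross_grid); rewrite /fwG -addnA.
apply: leq_trans (leq_addr _ _); apply: leq_add; apply: subset_leq_card.
  by apply/subsetP => r; rewrite !inE; case ra: (row_or r) => // _; apply: cross_grid_rows ra.
by apply/subsetP => c; rewrite !inE; case cb: (col_or c) => // _; apply: cross_grid_cols cb.
Qed.

End CrossGrid.

Section MirrorPairs.
Variables (T : finType) (n : nat) (w : n.-tuple T) (A M : T).

Definition mirror_pairs : {set 'I_n} :=
  [set i | (tnth w i == A) && (tnth w (rev_ord i) == M)].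

Definition mirror_orient (i : 'I_n) : option bool :=
  if i \in mirror_pairs then Some false
  else if rev_ord i \in mirror_pairs then Some true else None.

Lemma tnth_mirror_orient i a b :
  mirror_orient i = Some a -> tnth w (orient b i) = if b == a then A else M.
Proof.
rewrite /mirror_orient !inE rev_ordK.
case: ifP => [/andP[/eqP wA /eqP wM] [<-] | _]; first by case: b.
by case: ifP => // /andP[/eqP wA /eqP wM] [<-]; case: b.
Qed.

Lemma mirror_orient_agree r c a b :
  mirror_orient r = Some a -> mirror_orient c = Some b ->
  tnth w (orient a c) = tnth w (orient b r).
Proof.
by move=> ra cb; rewrite (tnth_mirror_orient a cb) (tnth_mirror_orient b ra) eq_sym.
Qed.

Lemma card_mirror_orient : A != M ->
  #|[set i | isSome (mirror_orient i)]| = 2 * #|mirror_pairs|.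
Proof.
move=> AM; have rev_inj : injective (@rev_ord n) := can_inj (@rev_ordK n).
have -> : [set i | isSome (mirror_orient i)] = mirror_pairs :|: (@rev_ord n) @^-1: mirror_pairs.
  apply/setP => i; rewrite in_set /mirror_orient in_setU [i \in _ @^-1: _]in_set.
  by case: (i \in mirror_pairs); case: (rev_ord i \in mirror_pairs).
have disjoint_mirror : mirror_pairs :&: (@rev_ord n) @^-1: mirror_pairs = set0.
  apply/setP => i; rewrite !inE rev_ordK.
  by apply/negP => /andP[/andP[/eqP wA _] /andP[_ /eqP wM]]; move: AM; rewrite -wA -wM eqxx.
by rewrite cardsU disjoint_mirror cards0 subn0 card_preimset // addnn -mul2n.
Qed.

Lemma fw_ge_4mirror : A != M -> 4 * #|mirror_pairs| <= fw w.
Proof.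
move=> AM; have := fw_ge_cross mirror_orient_agree.
by rewrite card_mirror_orient // -mulnDl.
Qed.

Definition letter_orient (r : 'I_n) : option bool := Some (tnth w r != A).

Definition mirror_pairs_forward (c : 'I_n) : option bool :=
  if c \in mirror_pairs then Some false else None.

Hypothesis w_binary : forall i, (tnth w i == A) || (tnth w i == M).

Lemma letter_orient_agree r c a b :
  letter_orient r = Some a -> mirror_pairs_forward c = Some b ->
  tnth w (orient a c) = tnth w (orient b r).
Proof.
case=> <-; rewrite /mirror_pairs_forward; case: ifP => //.
rewrite inE => /andP[/eqP wcA /eqP wcM] [<-]; rewrite /orient.
case: (eqVneq (tnth w r) A) => [-> | wrA] /=; first exact: wcA.
by rewrite wcM; move: (w_binary r); rewrite (negbTE wrA) => /eqP.
Qed.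

Lemma fw_ge_binary : n + #|mirror_pairs| <= fw w.
Proof.
have := fw_ge_cross letter_orient_agree.
have -> : [set r | isSome (letter_orient r)] = setT by apply/setP => r; rewrite !inE.
rewrite cardsT card_ord; congr (_ + _ <= _); apply: eq_card => c.
by rewrite in_set /mirror_pairs_forward; case: (c \in mirror_pairs).
Qed.

End MirrorPairs.

Theorem lemma10 (T : finType) (n : nat) (w : n.-tuple T) (A M : T) :
  2 <= n -> A != M -> A \in w -> M \in w ->
  let t := #|[set i : 'I_n | (tnth w i == A) && (tnth w (rev_ord i) == M)]| in
  4 * t <= fw w /\
  ((forall i : 'I_n, (tnth w i == A) || (tnth w i == M)) -> n + t <= fw w).
Proof.
move=> _ AM _ _ t.
by split; [exact: fw_ge_4mirror | exact: fw_ge_binary].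
Qed.
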